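(* Let $A$ be a circular $m\times n$ matrix, $b\in\mathbb{Z}_+^m$, $x^*\in Q(A,b)\setminus Q^*(A,b)$, and let $\Gamma$ be a circuit with negative cost in $D(A,x^* )$. Then the $\Gamma$-inequality is violated by $x^*$.
   Context: Notation: $[n]=\{1,\dots,n\}$ with addition mod $n$ (index $0$ identified with $n$); for $a,c\in[n]$ with $t\ge0$ minimal such that $a+t\equiv c\pmod n$, $[a,c)_n=\{a,\dots,a+t-1\}$ (mod $n$). An $m\times n$ $\{0,1\}$-matrix $A$ is circular if for each row $i$ there are $\ell_i\in[n]$ and an integer $2\le k_i\le n-1$ with row $i$ the incidence vector of $[\ell_i,\ell_i+k_i)_n$. $Q(A,b)=\{x\ge0:Ax\ge b\}$, $Q^*(A,b)=\operatorname{conv}(Q(A,b)\cap\mathbb{Z}^n)$. $D(A)$: node set $[n]$ (labels mod $n$); forward arcs $a_i=(\ell_i-1,\ell_i+k_i-1)$ ($i\in[m]$, length $k_i$), $a_{m+j}=(j-1,j)$ ($j\in[n]$, length $1$); reverse arcs $\bar a_i=(\ell_i+k_i-1,\ell_i-1)$ (length $-k_i$), $\bar a_{m+j}=(j,j-1)$ (length $-1$). A circuit is a simple directed circuit; winding number $p(\Gamma)$: $p(\Gamma)n=\sum_{a\in E(\Gamma)}l(a)$. A forward row arc $a_i$ jumps over $j$ iff $j\in[\ell_i,\ell_i+k_i)_n$; $(j-1,j)$ jumps over $j$ only; $\bar a_k$ jumps over $j$ iff $a_k$ does. $p^-(\Gamma,j)$ = number of reverse arcs of $\Gamma$ jumping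 over $j$. $\Gamma$-inequality (for $p(\Gamma)\ne0$): with $t(\Gamma,b)=\sum_{i:a_i\in E(\Gamma)}b_i-\sum_{i:\bar a_i\in E(\Gamma)}b_i$, $\beta=\lfloor t(\Gamma,b)/p(\Gamma)\rfloor$, $r=t(\Gamma,b)-\beta p(\Gamma)$, it is $\sum_{j\in[n]}[p^-(\Gamma,j)+r]x_j\ge r(\beta+1)+\sum_{i:\bar a_i\in E(\Gamma)}b_i$. Costs: $\tilde A=\binom{A}{I}$, $d=\binom{b}{0}$, $v$ = last column of $\tilde A$; for $x^*\in Q(A,b)$: $s^*=\tilde Ax^*-d$, $\mu=\lceil\mathbf{1}^Tx^*\rceil-\mathbf{1}^Tx^*$, $c^+(x^* )=\mu(s^*-(1-\mu)v)$, $c^-(x^* )=(1-\mu)(s^*+\mu v)$. In $D(A,x^* )$ arc $a_k$ ($k\in[m+n]$) has cost $c^+_k(x^* )$ and $\bar a_k$ has cost $c^-_k(x^* )$; the cost of a circuit is the sum of its arc costs. *)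

From mathcomp Require Import all_boot all_order all_algebra.
From mathcomp Require Import reals.
Set Implicit Arguments. Unset Strict Implicit. Unset Printing Implicit Defensive.
Import Order.TTheory GRing.Theory Num.Theory.
Local Open Scope ring_scope.

(* Columns of A are indexed by c : 'I_n, standing for the
   paper's column j = c+1 in [n].  Nodes of D(A) are labels mod n, represented
   by the canonical integer representative in [0,n).  A circular matrix is
   given by its data ell_i in [n], k_i (2 <= k_i <= n-1); row i is the
   incidence vector of [ell_i, ell_i + k_i)_n. *)

Section CircularDefs.
Variables (m n : nat) (ell k : 'I_m -> nat).

Definition circular : Prop :=
  forall i : 'I_m, (1 <= ell i <= n)%N /\ (2 <= k i <= n.-1)%N.

Definition in_row (i : 'I_m) (j : nat) : bool :=
  (((j%:Z - (ell i)%:Z) %% n%:Z)%Z < (k i)%:Z).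

Definition circA (R : nzRingType) : 'M[R]_(m, n) :=
  \matrix_(i < m, c < n) (in_row i c.+1)%:R.

(* arcs of D(A): (inl i, dir) is a_i / bar a_i, (inr c, dir) is a_{m+j} /
   bar a_{m+j} with j = c+1; dir = true means forward arc. *)
Definition darc := (('I_m + 'I_n) * bool)%type.

Definition node (z : int) : int := (z %% n%:Z)%Z.

Definition base_tail (e : 'I_m + 'I_n) : int :=
  match e with inl i => (ell i)%:Z - 1 | inr c => (nat_of_ord c)%:Z end.
Definition base_len (e : 'I_m + 'I_n) : int :=
  match e with inl i => (k i)%:Z | inr _ => 1 end.

Definition arc_tail (a : darc) : int :=
  if a.2 then node (base_tail a.1) else node (base_tail a.1 + base_len a.1).
Definition arc_head (a : darc) : int :=
  if a.2 then node (base_tail a.1 + base_len a.1) else node (base_tail a.1).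
Definition arc_len (a : darc) : int :=
  if a.2 then base_len a.1 else - base_len a.1.

Definition jumps (a : darc) (c : 'I_n) : bool :=
  match a.1 with inl i => in_row i c.+1 | inr c' => c' == c end.

Definition is_circuit (s : seq darc) : bool :=
  [&& s != [::], uniq (map arc_tail s) &
      cycle (fun a a' => arc_head a == arc_tail a') s].

(* winding number: p(Gamma) * n = sum of arc lengths *)
Definition winding (s : seq darc) : int := ((\sum_(a <- s) arc_len a) %/ n%:Z)%Z.

Definition arc_b (b : 'I_m -> nat) (a : darc) : int :=
  match a.1 with inl i => (b i)%:Z | inr _ => 0 end.

Definition t_val (b : 'I_m -> nat) (s : seq darc) : int :=
  \sum_(a <- s | a.2) arc_b b a - \sum_(a <- s | ~~ a.2) arc_b b a.

Definition rev_b (b : 'I_m -> nat) (s : seq darc) : int :=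
  \sum_(a <- s | ~~ a.2) arc_b b a.

Definition pminus (s : seq darc) (c : 'I_n) : nat :=
  count (fun a : darc => ~~ a.2 && jumps a c) s.

Definition gamma_beta (b : 'I_m -> nat) (s : seq darc) : int :=
  Num.floor ((t_val b s)%:~R / (winding s)%:~R : rat).
Definition gamma_r (b : 'I_m -> nat) (s : seq darc) : int :=
  t_val b s - gamma_beta b s * winding s.

Definition gamma_violated (R : realType) (b : 'I_m -> nat) (s : seq darc)
    (x : 'I_n -> R) : Prop :=
  \sum_(c < n) ((pminus s c)%:R + (gamma_r b s)%:~R) * x c <
  (gamma_r b s * (gamma_beta b s + 1))%:~R + (rev_b b s)%:~R.

Section Poly.
Variable R : realType.
Variable b : 'I_m -> nat.

Definition inQ (x : 'I_n -> R) : Prop :=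
  (forall c, 0 <= x c) /\
  (forall i, (b i)%:R <= \sum_(c < n) circA R i c * x c).

Definition inQstar (x : 'I_n -> R) : Prop :=
  exists (p : nat) (pts : 'I_p -> 'I_n -> R) (w : 'I_p -> R),
    [/\ forall t, inQ (pts t) /\ (forall c, pts t c \is a Num.int),
        forall t, 0 <= w t,
        \sum_(t < p) w t = 1 &
        forall c, x c = \sum_(t < p) w t * pts t c].

(* slack s^* = A~ x - d, last column v of A~, costs c^+ and c^- *)
Definition slack (x : 'I_n -> R) (e : 'I_m + 'I_n) : R :=
  match e with
  | inl i => \sum_(c < n) circA R i c * x c - (b i)%:R
  | inr c => x c end.
Definition vlast (e : 'I_m + 'I_n) : R :=
  match e with
  | inl i => (in_row i n)%:R
  | inr c => ((nat_of_ord c).+1 == n)%:R end.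
Definition mu (x : 'I_n -> R) : R :=
  (Num.ceil (\sum_(c < n) x c))%:~R - \sum_(c < n) x c.
Definition cplus (x : 'I_n -> R) (e : 'I_m + 'I_n) : R :=
  mu x * (slack x e - (1 - mu x) * vlast e).
Definition cminus (x : 'I_n -> R) (e : 'I_m + 'I_n) : R :=
  (1 - mu x) * (slack x e + mu x * vlast e).
Definition arc_cost (x : 'I_n -> R) (a : darc) : R :=
  if a.2 then cplus x a.1 else cminus x a.1.
Definition circuit_cost (x : 'I_n -> R) (s : seq darc) : R :=
  \sum_(a <- s) arc_cost x a.
End Poly.
End CircularDefs.

From mathcomp Require Import all_boot all_order all_algebra.
From mathcomp Require Import reals.
From mathcomp Require Import zify ring lra.
Set Implicit Arguments. Unset Strict Implicit. Unset Printing Implicit Defensive.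
Import Order.TTheory GRing.Theory Num.Theory.
Local Open Scope ring_scope.

(* For every column j, the forward arcs of a closed walk in D(A) jump over j
   exactly p(Gamma) times more often than its reverse arcs, since the walk
   winds p(Gamma) times around Z/n.  Summing slacks over the arcs therefore
   gives S+ - S- = p 1'x - t and v(forward) - v(reverse) = p, where S+ and S-
   are the (nonnegative) slack sums over forward and reverse arcs.  Writing
   1'x = N - mu with N = ceil(1'x), t = beta p + r and K = N - 1 - beta, the
   cost of Gamma becomes both S- + mu (p K - r) and S+ + (1 - mu)(r - p (K+1)).
   A negative cost forces both brackets to be negative, which, as r is the
   remainder of t modulo p, only happens for p > 0 and K = 0; the cost is then
   S- + r (1'x - beta - 1), i.e. the slack of x in the Gamma-inequality. *)

Lemma divz_addmul_small (q r d : int) : 0 <= r < d -> ((q * d + r) %/ d)%Z = q.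
Proof. by move=> r_bnd; rewrite divzMDl ?gt_eqF ?divz_small ?addr0 //; lia. Qed.

Lemma divzD_subE (n z L : int) : 0 < n -> 0 <= L <= n ->
  ((z + L) %/ n)%Z - (z %/ n)%Z = ((((- z - 1) %% n)%Z < L)%R : nat)%:Z.
Proof.
move=> n_gt0 L_bnd; have n_neq0 := lt0r_neq0 n_gt0.
have z_eq := divz_eq z n; have rho_ge0 := modz_ge0 z n_neq0.
have rho_lt := ltz_mod z n_neq0; rewrite gtr0_norm // in rho_lt.
set q := (z %/ n)%Z in z_eq *; set rho := (z %% n)%Z in z_eq rho_ge0 rho_lt.
have -> : ((- z - 1) %% n)%Z = n - 1 - rho.
  have -> : - z - 1 = (- q - 1) * n + (n - 1 - rho) by lia.
  by rewrite modzMDl modz_small //; lia.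
case: ltrP => L_rho /=.
  have -> : z + L = (q + 1) * n + (rho + L - n) by lia.
  by rewrite divz_addmul_small; lia.
have -> : z + L = q * n + (rho + L) by lia.
by rewrite divz_addmul_small; lia.
Qed.

Lemma sum_cycle_shift {T U : eqType} {V : nmodType} (h : U -> V) {F G : T -> U}
    {s : seq T} :
  cycle (fun a a' => F a == G a') s -> \sum_(a <- s) h (F a) = \sum_(a <- s) h (G a).
Proof.
case: s => [|a0 s]; first by rewrite !big_nil.
have shift y p : path (fun a a' => F a == G a') y p ->
    \sum_(a <- belast y p) h (F a) = \sum_(a <- p) h (G a).
  elim: p y => [|z p IHp] y /=; first by rewrite !big_nil.
  by move=> /andP[/eqP FG /IHp]; rewrite !big_cons FG => ->.
by move=> /shift; rewrite belast_rcons big_rcons => ->; rewrite big_cons addrC.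
Qed.

Lemma floor_ratio_rem (t p : int) (r := t - Num.floor (t%:~R / p%:~R : rat) * p) :
  (0 < p -> 0 <= r < p) /\ (p < 0 -> p < r <= 0).
Proof.
rewrite {}/r; have /andP[] := floor_itv (t%:~R / p%:~R : rat).
set be := Num.floor _ => fl_le fl_gt.
split=> p_sgn.
  have p_gt0 : (0 : rat) < p%:~R by rewrite ltr0z.
  rewrite ler_pdivlMr // -intrM ler_int in fl_le.
  rewrite ltr_pdivrMr // -intrM ltr_int in fl_gt.
  by apply/andP; split; nia.
have p_lt0 : p%:~R < (0 : rat) by rewrite ltrz0.
rewrite ler_ndivlMr // -intrM ler_int in fl_le.
rewrite ltr_ndivrMr // -intrM ltr_int in fl_gt.
by apply/andP; split; nia.
Qed.

Lemma remainder_window (p K r : int) :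
  (0 < p -> 0 <= r < p) -> (p < 0 -> p < r <= 0) ->
  p * K - r < 0 -> r - p * (K + 1) < 0 -> 0 < p /\ K = 0.
Proof.
move=> r_pos r_neg lt1 lt2.
case: (ltgtP p 0) => [/r_neg|/r_pos|p0]; last by lia.
- by move=> /andP[]; nia.
- by move=> /andP[]; split; [|nia].
Qed.

Section Winding.
Variables (m n : nat) (ell k : 'I_m -> nat).
Hypothesis Hcirc : circular n ell k.
Hypothesis n_gt0 : (0 < n)%N.

Lemma base_len_bounds (e : 'I_m + 'I_n) : 0 <= base_len k e <= n%:Z.
Proof. by case: e => [i|c] /=; [have [_] := Hcirc i|]; lia. Qed.

Lemma modz_subr_congr (c z w : int) :
  (z %% n)%Z = (w %% n)%Z -> ((c - z) %% n)%Z = ((c - w) %% n)%Z.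
Proof. by move=> zw; rewrite -modzDmr -modzNm zw modzNm modzDmr. Qed.

Lemma jumpsE (a : darc m n) (c : 'I_n) :
  jumps ell k a c = (((c%:Z - base_tail ell a.1) %% n)%Z < base_len k a.1).
Proof.
case: a => [[i|c'] d]; rewrite /jumps /=.
  by rewrite /in_row; have -> : c%:Z - ((ell i)%:Z - 1) = c.+1%:Z - (ell i)%:Z by lia.
have c_lt := ltn_ord c; have c'_lt := ltn_ord c'; rewrite -val_eqE /=.
case: (leqP c' c) => c_c'.
  by rewrite modz_small; [apply/eqP/idP; lia | lia].
rewrite -(modzDl _ n) modz_small; [apply/eqP/idP; lia | lia].
Qed.

(* [laps c z] changes by one exactly when a walk on Z passes an integer
   congruent to the paper's column [c + 1] modulo [n]. *)
Definition laps (c : 'I_n) (z : int) : int := ((z - (c.+1)%:Z) %/ n)%Z.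

Lemma laps_addE (c : 'I_n) (z L : int) : 0 <= L <= n%:Z ->
  laps c (z + L) - laps c z = ((((c%:Z - z) %% n)%Z < L)%R : nat)%:Z.
Proof.
move=> L_bnd; rewrite /laps.
have -> : z + L - c.+1%:Z = (z - c.+1%:Z) + L by ring.
rewrite divzD_subE ?ltz_nat //.
by have -> : - (z - c.+1%:Z) - 1 = c%:Z - z by lia.
Qed.

Definition signed_jump (a : darc m n) (c : 'I_n) : int :=
  if a.2 then (jumps ell k a c)%:Z else - (jumps ell k a c)%:Z.

Lemma signed_jumpE (a : darc m n) (c : 'I_n) :
  signed_jump a c =
  laps c (arc_tail ell k a + arc_len k a) - laps c (arc_tail ell k a).
Proof.
have L_bnd := base_len_bounds a.1.
rewrite /signed_jump jumpsE /arc_tail /arc_len /node.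
case: a L_bnd => [e []] L_bnd /=.
  by rewrite laps_addE // (modz_subr_congr _ (modz_mod _ _)).
set z := ((base_tail ell e + base_len k e) %% n)%Z.
rewrite -[RHS]opprB; have := laps_addE c (z - base_len k e) L_bnd; rewrite subrK => ->.
by rewrite (modz_subr_congr _ (w := base_tail ell e)) // /z modzDml addrK.
Qed.

Lemma arc_headE (a : darc m n) :
  arc_head ell k a = ((arc_tail ell k a + arc_len k a) %% n)%Z.
Proof.
by case: a => [e []]; rewrite /arc_tail /arc_head /arc_len /node /= modzDml ?addrK.
Qed.

Lemma sum_signed_jump (s : seq (darc m n)) (c : 'I_n) :
  cycle (fun a a' => arc_head ell k a == arc_tail ell k a') s ->
  \sum_(a <- s) signed_jump a c = winding k s.
Proof.
move=> s_closed; have n_neq0 : n%:Z != 0 by rewrite lt0r_neq0 ?ltz_nat.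
pose q (a : darc m n) := ((arc_tail ell k a + arc_len k a) %/ n)%Z.
have end_eq a : arc_tail ell k a + arc_len k a = q a * n + arc_head ell k a.
  by rewrite arc_headE -divz_eq.
have shift_laps := sum_cycle_shift (laps c) s_closed.
have shift_id := sum_cycle_shift id s_closed.
have -> : \sum_(a <- s) signed_jump a c =
    \sum_(a <- s) q a + (\sum_(a <- s) laps c (arc_head ell k a)
                         - \sum_(a <- s) laps c (arc_tail ell k a)).
  rewrite -sumrB -big_split /=; apply: eq_bigr => a _.
  by rewrite signed_jumpE end_eq /laps -addrA divzMDl // addrA.
rewrite shift_laps subrr addr0 /winding.
have -> : \sum_(a <- s) arc_len k a =
    \sum_(a <- s) q a * n + (\sum_(a <- s) arc_head ell k a
                             - \sum_(a <- s) arc_tail ell k a).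
  rewrite -sumrB -big_split /=; apply: eq_bigr => a _.
  by have := end_eq a; lia.
by rewrite shift_id subrr addr0 -mulr_suml mulzK.
Qed.

End Winding.

Lemma darc_n_gt0 (m n : nat) (ell k : 'I_m -> nat) :
  circular n ell k -> darc m n -> (0 < n)%N.
Proof.
move=> Hcirc [[i|c] _]; last exact: leq_ltn_trans (ltn_ord c).
by have [_] := Hcirc i; lia.
Qed.

Lemma sum_sign_split (T : Type) (V : zmodType) (s : seq T) (P : pred T) (G : T -> V) :
  \sum_(a <- s) (if P a then G a else - G a) =
  \sum_(a <- s | P a) G a - \sum_(a <- s | ~~ P a) G a.
Proof.
rewrite (bigID P) /= -sumrN.
by congr (_ + _); apply: eq_bigr => a; [move=> -> | move=> /negbTE ->].
Qed.

Section Slacks.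
Variables (R : realType) (m n : nat) (ell k b : 'I_m -> nat) (x : 'I_n -> R).

Definition fwd_slack (s : seq (darc m n)) : R :=
  \sum_(a <- s | a.2) slack ell k b x a.1.
Definition rev_slack (s : seq (darc m n)) : R :=
  \sum_(a <- s | ~~ a.2) slack ell k b x a.1.

Lemma slack_ge0 (e : 'I_m + 'I_n) : inQ ell k b x -> 0 <= slack ell k b x e.
Proof. by case: e => [i|c] [x_ge0 Ax_ge_b] /=; rewrite ?subr_ge0. Qed.

Lemma mu_bounds : 0 <= mu x < 1.
Proof. by have /andP[] := ceil_itv (\sum_(c < n) x c); rewrite /mu intrB; lra. Qed.

Lemma slackE (a : darc m n) : slack ell k b x a.1 =
  \sum_(c < n) (jumps ell k a c)%:R * x c - (arc_b b a)%:~R.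
Proof.
case: a => [[i|c'] d]; rewrite /slack /jumps /arc_b /=.
  by congr (_ - _); apply: eq_bigr => c _; rewrite mxE.
rewrite subr0 (bigD1 c') //= eqxx mul1r big1 ?addr0 // => c /negbTE.
by rewrite eq_sym => ->; rewrite mul0r.
Qed.

Lemma vlastE (c0 : 'I_n) (a : darc m n) :
  c0.+1 = n -> vlast ell k R a.1 = (jumps ell k a c0)%:R.
Proof.
move=> c0_last; case: a => [[i|c'] d]; rewrite /vlast /jumps /=.
  by rewrite c0_last.
by rewrite -[X in (_ == X)%:R = _]c0_last eqSS.
Qed.

Lemma pminusE (s : seq (darc m n)) (c : 'I_n) :
  ((pminus ell k s c)%:R : R) = \sum_(a <- s | ~~ a.2) (jumps ell k a c)%:R.
Proof.
rewrite /pminus; elim: s => [|a s IHs]; first by rewrite big_nil.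
by rewrite big_cons /= natrD IHs; case: a.2; rewrite ?add0r //; case: jumps.
Qed.

Lemma rev_slackE (s : seq (darc m n)) : rev_slack s =
  \sum_(c < n) (pminus ell k s c)%:R * x c - (rev_b b s)%:~R.
Proof.
rewrite /rev_slack (eq_bigr _ (fun a _ => slackE a)) sumrB /rev_b rmorph_sum.
congr (_ - _); rewrite exchange_big /=; apply: eq_bigr => c _.
by rewrite pminusE mulr_suml.
Qed.

Lemma gamma_violatedE (s : seq (darc m n)) :
  gamma_violated ell k b s x <->
  rev_slack s + (gamma_r k b s)%:~R *
    (\sum_(c < n) x c - (gamma_beta k b s + 1)%:~R) < 0.
Proof.
rewrite /gamma_violated -subr_lt0 rev_slackE intrM.
rewrite (eq_bigr _ (fun c _ => mulrDl _ _ (x c))) big_split /= -mulr_sumr.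
by split=> ?; lra.
Qed.

Lemma circuit_costE (s : seq (darc m n)) : circuit_cost ell k b x s =
  mu x * (fwd_slack s - (1 - mu x) * \sum_(a <- s | a.2) vlast ell k R a.1) +
  (1 - mu x) * (rev_slack s + mu x * \sum_(a <- s | ~~ a.2) vlast ell k R a.1).
Proof.
rewrite /circuit_cost (bigID (fun a : darc m n => a.2)) /=; congr (_ + _).
  rewrite mulr_sumr -sumrB mulr_sumr; apply: eq_bigr => a fwd_a.
  by rewrite /arc_cost fwd_a.
rewrite mulr_sumr -big_split mulr_sumr; apply: eq_bigr => a rev_a.
by rewrite /arc_cost (negbTE rev_a).
Qed.

Hypothesis Hcirc : circular n ell k.
Hypothesis n_gt0 : (0 < n)%N.
Variable s : seq (darc m n).
Hypothesis s_closed : cycle (fun a a' => arc_head ell k a == arc_tail ell k a') s.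

Lemma sum_signed_jump_weight (w : 'I_n -> R) :
  \sum_(a <- s) \sum_(c < n) (signed_jump ell k a c)%:~R * w c =
  (winding k s)%:~R * \sum_(c < n) w c.
Proof.
rewrite exchange_big mulr_sumr; apply: eq_bigr => c _ /=.
by rewrite -mulr_suml -rmorph_sum sum_signed_jump.
Qed.

Lemma fwd_sub_rev_slack :
  fwd_slack s - rev_slack s = (winding k s)%:~R * \sum_(c < n) x c - (t_val b s)%:~R.
Proof.
rewrite -sum_sign_split -sum_signed_jump_weight /t_val rmorphB /= !rmorph_sum.
rewrite -sum_sign_split -sumrB; apply: eq_bigr => a _; rewrite slackE /signed_jump.
case: a.2; first by congr (_ - _); apply: eq_bigr.
rewrite opprB opprK addrC -sumrN; congr (_ + _).
by apply: eq_bigr => c _; rewrite mulrNz mulNr.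
Qed.

Lemma fwd_sub_rev_vlast :
  \sum_(a <- s | a.2) vlast ell k R a.1 - \sum_(a <- s | ~~ a.2) vlast ell k R a.1 =
  (winding k s)%:~R.
Proof.
have c0_lt : (n.-1 < n)%N by rewrite ltn_predL.
pose c0 : 'I_n := Ordinal c0_lt.
have c0_last : c0.+1 = n by rewrite prednK.
rewrite -sum_sign_split -(sum_signed_jump Hcirc n_gt0 c0 s_closed) rmorph_sum.
apply: eq_bigr => a _; rewrite (vlastE _ c0_last) /signed_jump.
by case: a.2; rewrite ?rmorphN.
Qed.

Lemma circuit_cost_rev : circuit_cost ell k b x s = rev_slack s + mu x *
  (winding k s * (Num.ceil (\sum_(c < n) x c) - 1 - gamma_beta k b s)
   - gamma_r k b s)%:~R.
Proof.
have fwd_sub_rev := fwd_sub_rev_slack; have vlast_diff := fwd_sub_rev_vlast.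
rewrite circuit_costE.
rewrite (_ : fwd_slack s = rev_slack s + (winding k s)%:~R * \sum_(c < n) x c
                           - (t_val b s)%:~R); last by lra.
rewrite (_ : \sum_(a <- s | a.2) vlast ell k R a.1 =
             \sum_(a <- s | ~~ a.2) vlast ell k R a.1 + (winding k s)%:~R); last by lra.
rewrite /mu /gamma_r !(intrM, intrB, intrD).
ring.
Qed.

Lemma circuit_cost_fwd : circuit_cost ell k b x s = fwd_slack s + (1 - mu x) *
  (gamma_r k b s - winding k s * (Num.ceil (\sum_(c < n) x c) - gamma_beta k b s))%:~R.
Proof.
have fwd_sub_rev := fwd_sub_rev_slack; have vlast_diff := fwd_sub_rev_vlast.
rewrite circuit_costE.
rewrite (_ : rev_slack s = fwd_slack s - (winding k s)%:~R * \sum_(c < n) x c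
                           + (t_val b s)%:~R); last by lra.
rewrite (_ : \sum_(a <- s | a.2) vlast ell k R a.1 =
             \sum_(a <- s | ~~ a.2) vlast ell k R a.1 + (winding k s)%:~R); last by lra.
rewrite /mu /gamma_r !(intrM, intrB, intrD).
ring.
Qed.

End Slacks.

Theorem lemma4p7 (R : realType) (m n : nat) (ell k : 'I_m -> nat)
  (Hcirc : circular n ell k) (b : 'I_m -> nat) (x : 'I_n -> R)
  (HQ : inQ ell k b x) (HnQ : ~ inQstar ell k b x)
  (s : seq (darc m n)) (Hs : is_circuit ell k s)
  (Hneg : circuit_cost ell k b x s < 0) :
  winding k s != 0 /\ gamma_violated ell k b s x.
Proof.
have /and3P[s_nil _ s_closed] := Hs.
have n_gt0 : (0 < n)%N.
  by case: s s_nil {Hs Hneg s_closed} => // a _ _; apply: darc_n_gt0 Hcirc a.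
have Sr_ge0 : 0 <= rev_slack ell k b x s by apply: sumr_ge0 => a _; apply: slack_ge0.
have Sf_ge0 : 0 <= fwd_slack ell k b x s by apply: sumr_ge0 => a _; apply: slack_ge0.
have /andP[mu_ge0 mu_lt1] := mu_bounds x.
have [r_pos r_neg] := floor_ratio_rem (t_val b s) (winding k s).
have cost_rev := circuit_cost_rev b x Hcirc n_gt0 s_closed.
have cost_fwd := circuit_cost_fwd b x Hcirc n_gt0 s_closed.
rewrite gamma_violatedE.
set X := \sum_(c < n) x c in cost_rev cost_fwd *.
set N := Num.ceil X in cost_rev cost_fwd.
set p := winding k s in r_pos r_neg cost_rev cost_fwd *.
set be := gamma_beta k b s in cost_rev cost_fwd *.
set r := gamma_r k b s in r_pos r_neg cost_rev cost_fwd *.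
have u_neg : p * (N - 1 - be) - r < 0 by rewrite -(ltrz0 R); nra.
have w_neg : r - p * (N - 1 - be + 1) < 0.
  by rewrite -(ltrz0 R) (_ : N - 1 - be + 1 = N - be); [nra | ring].
have [p_gt0 K0] := remainder_window r_pos r_neg u_neg w_neg.
split; first by rewrite gt_eqF.
have X_eq : X = (be + 1)%:~R - mu x.
  by rewrite /mu -/X -/N (_ : N = be + 1); [ring | lia].
rewrite K0 mulr0 sub0r in cost_rev; rewrite X_eq; nra.
Qed.
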